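(* Let $\{(\mathbf{x}^n,\mathbf{Z}^n,\Gamma^n)\}$ be generated by the SPULTRA iteration defined in the context (with exact image update) from some initialization with $\mathbf{x}^0\in\mathcal{X}$. Suppose a subsequence $\{(\mathbf{x}^{q_m},\mathbf{Z}^{q_m-1},\Gamma^{q_m-1})\}_m$ converges to $(\mathbf{x}^*,\mathbf{Z}^{**},\Gamma^{**})$. Then $\{\mathbf{x}^{q_m-1}\}_m$ also converges to $\mathbf{x}^*$, and $\mathbf{x}^*$ is the unique minimizer over $\mathbf{x}$ of $F(\mathbf{x},\mathbf{Z}^{**},\Gamma^{**};\mathbf{x}^* )$.
   Context: Data and model. $\mathbf{A}\in\mathbb{R}^{N_d\times N_p}$ is a matrix with nonnegative entries; write $l_i(\mathbf{x})=[\mathbf{A}\mathbf{x}]_i$. Constants: $I_0>0$, $\sigma^2\ge 0$, measurements $Y_i\in\mathbb{R}$, coefficients $s_{1_i},s_{2_i}\in\mathbb{R}$, $x_{\max}>0$. Let $f_i(l)=s_{1_i}l+s_{2_i}l^2$ and $$h_i(l)=\big(I_0e^{-f_i(l)}+\sigma^2\big)-Y_i\log\big(I_0e^{-f_i(l)}+\sigma^2\big),\qquad \mathsf{L}(\mathbf{x})=\sum_{i=1}^{N_d}h_i(l_i(\mathbf{x})).$$ Let $\mathcal{X}=\{\mathbf{x}\in\mathbb{R}^{N_p}:0\le x_j\le x_{\max}\ \forall j\}$ and $\mathfrak{X}(\mathbf{x})=0$ if $\mathbf{x}\in\mathcal{X}$, $+\infty$ otherwise. Regularizer. For $j=1,\dots,\tilde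 N$, $\mathbf{P}_j\in\mathbb{R}^{v\times N_p}$ extracts the $j$-th patch of $v$ voxels (a row-selection matrix); assume every voxel belongs to at least one patch. $\boldsymbol{\Omega}_1,\dots,\boldsymbol{\Omega}_K\in\mathbb{R}^{v\times v}$ are fixed nonsingular (pre-learned) transforms. Weights $\tau_j>0$, and $\beta>0$, $\gamma_c>0$. Variables: sparse code matrix $\mathbf{Z}=[\mathbf{z}_1,\dots,\mathbf{z}_{\tilde N}]$ with $\mathbf{z}_j\in\mathbb{R}^v$, and class vector $\Gamma\in\{1,\dots,K\}^{\tilde N}$. Define $$\mathsf{R}(\mathbf{x},\mathbf{Z},\Gamma)=\beta\sum_{j=1}^{\tilde N}\tau_j\Big(\|\boldsymbol{\Omega}_{\Gamma_j}\mathbf{P}_j\mathbf{x}-\mathbf{z}_j\|_2^2+\gamma_c^2\|\mathbf{z}_j\|_0\Big),$$ where $\|\cdot\|_0$ counts nonzero entries. The objective is $G(\mathbf{x},\mathbf{Z},\Gamma)=\mathsf{L}(\mathbf{x})+\mathsf{R}(\mathbf{x},\mathbf{Z},\Gamma)+\mathfrak{X}(\mathbf{x})$. Surrogates. Curvature functions $c_i:[0,\infty)\to(0,\infty)$ are continuous and chosen so that, with $$q_i(l;\bar l)=h_i(\bar l)+\dot h_i(\bar l)(l-\bar l)+\tfrac12 c_i(\bar l)(l-\bar l)^2,$$ one has $h_i(l)\le q_i(l;\bar l)$ for all $l\ge0$, $\bar l\ge 0$ (as achieved by the optimum-curvature rule $c_i(\bar l)=2\,[h_i(0)-h_i(\bar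 l)+\bar l\,\dot h_i(\bar l)]/\bar l^2$ for $\bar l>0$, $c_i(0)=\ddot h_i(0)$, with nonpositive values replaced by a small positive constant). For $\bar{\mathbf{x}}\in\mathcal{X}$ define the majorizer $$F(\mathbf{x},\mathbf{Z},\Gamma;\bar{\mathbf{x}})=\sum_{i=1}^{N_d}q_i\big(l_i(\mathbf{x});l_i(\bar{\mathbf{x}})\big)+\mathsf{R}(\mathbf{x},\mathbf{Z},\Gamma)+\mathfrak{X}(\mathbf{x}).$$ SPULTRA iteration (exact version). Given $(\mathbf{x}^n,\mathbf{Z}^n,\Gamma^n)$: image update $\mathbf{x}^{n+1}\in\arg\min_{\mathbf{x}}F(\mathbf{x},\mathbf{Z}^n,\Gamma^n;\mathbf{x}^n)$; then sparse coding and clustering $(\mathbf{Z}^{n+1},\Gamma^{n+1})\in\arg\min_{\mathbf{Z},\Gamma}\mathsf{R}(\mathbf{x}^{n+1},\mathbf{Z},\Gamma)$ (computed exactly: for each $j$, $\Gamma_j^{n+1}$ minimizes over $k$ the value $\|\boldsymbol{\Omega}_k\mathbf{P}_j\mathbf{x}^{n+1}-H_{\gamma_c}(\boldsymbol{\Omega}_k\mathbf{P}_j\mathbf{x}^{n+1})\|_2^2+\gamma_c^2\|H_{\gamma_c}(\boldsymbol{\Omega}_k\mathbf{P}_j\mathbf{x}^{n+1})\|_0$ and $\mathbf{z}_j^{n+1}=H_{\gamma_c}(\boldsymbol{\Omega}_{\Gamma_j^{n+1}}\mathbf{P}_j\mathbf{x}^{n+1})$, where $H_{\gamma_c}$ zeroes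 entries of magnitude less than $\gamma_c$ and keeps the others). *)

From Stdlib Require Import Reals Lra Lia.
Open Scope R_scope.

Fixpoint sumR (n : nat) (f : nat -> R) : R :=
  match n with
  | O => 0
  | S k => sumR k f + f k
  end.

(* Problem data. Vectors are functions nat -> R (only indices < dimension matter);
   matrices are functions nat -> nat -> R.  Classes are indexed 0..K-1
   (the paper's 1..K). *)
Record spultra_data := {
  Nd : nat;                         (* number of measurements *)
  Np : nat;                         (* number of voxels *)
  v : nat;                          (* patch size *)
  Nt : nat;                         (* number of patches  (N tilde) *)
  K : nat;                          (* number of classes / transforms *)
  A : nat -> nat -> R;
  I0 : R;
  sig2 : R;
  Y : nat -> R;
  s1 : nat -> R;
  s2 : nat -> R;
  xmax : R;
  patch : nat -> nat -> nat;        (* P_j x = (x (patch j 0), ..., x (patch j (v-1))) *)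
  Om : nat -> nat -> nat -> R;      (* Om k r c = entry (r,c) of Omega_k *)
  tau : nat -> R;
  beta : R;
  gc : R;
  curv : nat -> R -> R
}.

Section Defs.
Variable P : spultra_data.

Definition lin (x : nat -> R) (i : nat) : R := sumR (Np P) (fun p => A P i p * x p).

Definition fsc (i : nat) (l : R) : R := s1 P i * l + s2 P i * l ^ 2.
Definition gsc (i : nat) (l : R) : R := I0 P * exp (- fsc i l) + sig2 P.

Definition h (i : nat) (l : R) : R := gsc i l - Y P i * ln (gsc i l).

Definition hdot (i : nat) (l : R) : R :=
  (- (I0 P * exp (- fsc i l)) * (s1 P i + 2 * s2 P i * l)) * (1 - Y P i / gsc i l).

Definition qsur (i : nat) (l lb : R) : R :=
  h i lb + hdot i lb * (l - lb) + / 2 * curv P i lb * (l - lb) ^ 2.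

Definition Lfun (x : nat -> R) : R := sumR (Nd P) (fun i => h i (lin x i)).

Definition inX (x : nat -> R) : Prop := forall p, (p < Np P)%nat -> 0 <= x p <= xmax P.

Definition OmP (k j : nat) (x : nat -> R) (r : nat) : R :=
  sumR (v P) (fun c => Om P k r c * x (patch P j c)).

Definition sqnorm (w : nat -> R) : R := sumR (v P) (fun r => w r ^ 2).

Definition l0 (z : nat -> R) : R :=
  sumR (v P) (fun r => if Req_dec_T (z r) 0 then 0 else 1).

(* R(x, Z, Gamma);  Z j r = (z_j)_r,  G j = Gamma_j *)
Definition Rreg (x : nat -> R) (Z : nat -> nat -> R) (G : nat -> nat) : R :=
  beta P * sumR (Nt P) (fun j =>
    tau P j * (sqnorm (fun r => OmP (G j) j x r - Z j r) + gc P ^ 2 * l0 (Z j))).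

(* finite part of the majorizer F(x, Z, Gamma; xbar) (the indicator of X is
   handled by restricting minimization to X) *)
Definition Fmaj (x : nat -> R) (Z : nat -> nat -> R) (G : nat -> nat) (xb : nat -> R) : R :=
  sumR (Nd P) (fun i => qsur i (lin x i) (lin xb i)) + Rreg x Z G.

Definition valid_class (G : nat -> nat) : Prop := forall j, (j < Nt P)%nat -> (G j < K P)%nat.

Definition spultra_seq (x : nat -> nat -> R) (Z : nat -> nat -> nat -> R)
    (G : nat -> nat -> nat) : Prop :=
  inX (x O) /\ valid_class (G O) /\
  forall n,
    (inX (x (S n)) /\
     forall y, inX y -> Fmaj (x (S n)) (Z n) (G n) (x n) <= Fmaj y (Z n) (G n) (x n)) /\
    (valid_class (G (S n)) /\
     forall Z' G', valid_class G' -> Rreg (x (S n)) (Z (S n)) (G (S n)) <= Rreg (x (S n)) Z' G').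

End Defs.

Lemma hdot_correct (P : spultra_data) i l :
  0 < I0 P -> 0 <= sig2 P -> derivable_pt_lim (h P i) l (hdot P i l).
Proof.
  intros HI Hs.
  assert (Hg : forall t, 0 < gsc P i t).
  { intro t; unfold gsc; pose proof (exp_pos (- fsc P i t)); nra. }
  assert (Hf : derivable_pt_lim (fsc P i) l (s1 P i + 2 * s2 P i * l)).
  { unfold fsc.
    replace (s1 P i + 2 * s2 P i * l) with (s1 P i * 1 + s2 P i * (INR 2 * l ^ (2 - 1))) by (simpl; ring).
    apply derivable_pt_lim_plus.
    - apply derivable_pt_lim_scal. apply derivable_pt_lim_id.
    - apply derivable_pt_lim_scal. apply derivable_pt_lim_pow. }
  assert (HG : derivable_pt_lim (gsc P i) l (- (I0 P * exp (- fsc P i l)) * (s1 P i + 2 * s2 P i * l))).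
  { unfold gsc.
    replace (- (I0 P * exp (- fsc P i l)) * (s1 P i + 2 * s2 P i * l))
      with (I0 P * (exp (- fsc P i l) * - (s1 P i + 2 * s2 P i * l)) + 0) by ring.
    apply derivable_pt_lim_plus; [| apply derivable_pt_lim_const].
    apply derivable_pt_lim_scal.
    apply (derivable_pt_lim_comp (fun t => - fsc P i t) exp).
    - apply derivable_pt_lim_opp. exact Hf.
    - apply derivable_pt_lim_exp. }
  unfold h, hdot.
  set (d := - (I0 P * exp (- fsc P i l)) * (s1 P i + 2 * s2 P i * l)) in *.
  replace (d * (1 - Y P i / gsc P i l)) with (d - Y P i * (/ gsc P i l * d))
    by (unfold Rdiv; ring).
  apply derivable_pt_lim_minus; [exact HG|].
  apply derivable_pt_lim_scal.
  apply (derivable_pt_lim_comp (gsc P i) ln); [exact HG|].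
  apply derivable_pt_lim_ln. apply Hg.
Qed.

(* F(., Z, Gamma; xbar) is a quadratic in the image whose Hessian form is positive
   definite on differences: its curvature part is nonnegative, its transform part
   controls every patch, the transforms are invertible and the patches cover all voxels.
   Comparing the exact minimizer x^{n+1} with the midpoint of x^{n+1} and x^n, and using
   h_i <= q_i and the optimality of the sparse coding step, the cost L + R drops by at
   least a quarter of that Hessian form of x^{n+1} - x^n.  The cost is bounded below, so
   these gaps vanish, hence x^{q_m} - x^{q_m - 1} -> 0 since the classes are eventually
   fixed along the subsequence.  Minimality of x^{q_m} passes to the limit (the l0 term
   depends only on the codes and cancels), and the same midpoint comparison between two
   minimizers gives uniqueness. *)

From Stdlib Require Import Reals Lra Lia.
From mathcomp Require all_boot all_algebra Rstruct.
Open Scope R_scope.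

Module SquareSystem.
Import all_boot all_algebra Rstruct.
Import GRing.Theory.
Local Open Scope ring_scope.

Lemma sumR_big n (f : nat -> R) : sumR n f = \sum_(i < n) f i.
Proof. by elim: n => [|n IH] /=; rewrite ?big_ord0 // big_ord_recr /= IH. Qed.

Lemma injective_left_inverse (n : nat) (O : nat -> nat -> R) :
  (forall z : nat -> R,
     (forall r, (r < n)%coq_nat -> sumR n (fun c => Rmult (O r c) (z c)) = R0) ->
     forall c, (c < n)%coq_nat -> z c = R0) ->
  exists B : nat -> nat -> R, forall (w : nat -> R) c, (c < n)%coq_nat ->
    sumR n (fun r => Rmult (B c r) (sumR n (fun c' => Rmult (O r c') (w c')))) = w c.
Proof.
move=> inj_O.
pose M : 'M[R]_n := \matrix_(i < n, j < n) O i j.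
have ker0 : kermx M^T = 0.
  apply/matrixP => i c; rewrite [RHS]mxE.
  pose z c := oapp (kermx M^T i) 0 (insub c).
  have -> : kermx M^T i c = z c by rewrite /z valK.
  apply: inj_O (elimT ltP (ltn_ord c)) => r /ltP lt_rn.
  have := congr1 (fun A : 'M[R]_n => A i (Ordinal lt_rn)) (mulmx_ker M^T).
  rewrite mxE [RHS]mxE sumR_big => E; apply: (etrans _ E).
  by apply: eq_bigr => k _; rewrite /z valK /= mulrC [M^T _ _]mxE [M _ _]mxE.
have M_unit : M \in unitmx by rewrite -unitmx_tr -row_free_unit -kermx_eq0 ker0.
exists (fun c r => if insub c is Some c1 then oapp (invmx M c1) 0 (insub r) else 0).
move=> w c /ltP lt_cn.
have -> : insub c = Some (Ordinal lt_cn) by apply: insubT.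
set c1 := Ordinal lt_cn.
transitivity (\sum_(k < n) (invmx M *m M) c1 k * w k).
  rewrite sumR_big.
  under eq_bigr do rewrite valK sumR_big big_distrr /=.
  rewrite exchange_big /=; apply: eq_bigr => k _.
  rewrite !mxE big_distrl /=; apply: eq_bigr => r _.
  by rewrite [M r k]mxE; exact: esym (Rmult_assoc _ _ _).
rewrite mulVmx // (bigD1 c1) //= big1 ?mxE ?eqxx ?mul1r ?addr0 //.
by move=> k ne_k; rewrite mxE eq_sym (negbTE ne_k) mul0r.
Qed.
End SquareSystem.

Lemma sumR_ext n f g : (forall i, (i < n)%nat -> f i = g i) -> sumR n f = sumR n g.
Proof.
  induction n as [|n IH]; intros Hfg; simpl; [reflexivity|].
  f_equal; [apply IH; intros|]; apply Hfg; lia.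
Qed.

Lemma sumR_plus n f g : sumR n (fun i => f i + g i) = sumR n f + sumR n g.
Proof. induction n as [|n IH]; simpl; [ring|]. rewrite IH. ring. Qed.

Lemma sumR_scal n f a : sumR n (fun i => a * f i) = a * sumR n f.
Proof. induction n as [|n IH]; simpl; [ring|]. rewrite IH. ring. Qed.

Lemma sumR_le n f g : (forall i, (i < n)%nat -> f i <= g i) -> sumR n f <= sumR n g.
Proof.
  induction n as [|n IH]; intros Hfg; simpl; [lra|].
  apply Rplus_le_compat; [apply IH; intros; apply Hfg|apply Hfg]; lia.
Qed.

Lemma sumR_nonneg n f : (forall i, (i < n)%nat -> 0 <= f i) -> 0 <= sumR n f.
Proof.
  induction n as [|n IH]; intros Hf; simpl; [lra|].
  assert (0 <= sumR n f) by (apply IH; intros; apply Hf; lia).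
  assert (0 <= f n) by (apply Hf; lia). lra.
Qed.

Lemma sumR_ge_term n f i :
  (forall i, (i < n)%nat -> 0 <= f i) -> (i < n)%nat -> f i <= sumR n f.
Proof.
  induction n as [|n IH]; intros Hf Hi; simpl; [lia|].
  destruct (Nat.eq_dec i n) as [->|Hne].
  - assert (0 <= sumR n f) by (apply sumR_nonneg; intros; apply Hf; lia). lra.
  - assert (f i <= sumR n f) by (apply IH; [intros; apply Hf|]; lia).
    assert (0 <= f n) by (apply Hf; lia). lra.
Qed.

Lemma Un_cv_ext u w l : (forall n, u n = w n) -> Un_cv u l -> Un_cv w l.
Proof. intros E Hu e He. destruct (Hu e He) as [N HN]. exists N. intros. rewrite <- E. auto. Qed.

Lemma Un_cv_eventually_eq u w l :
  (exists M, forall n, (M <= n)%nat -> u n = w n) -> Un_cv u l -> Un_cv w l.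
Proof.
  intros [M E] Hu e He. destruct (Hu e He) as [N HN]. exists (max M N). intros n Hn.
  rewrite <- E by lia. apply HN. lia.
Qed.

Lemma Un_cv_const c : Un_cv (fun _ => c) c.
Proof. intros e He. exists O. intros. unfold Rdist. rewrite Rminus_diag, Rabs_R0. lra. Qed.

Lemma Un_cv_scal c u l : Un_cv u l -> Un_cv (fun n => c * u n) (c * l).
Proof. intros. apply CV_mult; [apply Un_cv_const|assumption]. Qed.

Lemma Un_cv_sqr u l : Un_cv u l -> Un_cv (fun n => u n ^ 2) (l ^ 2).
Proof.
  intros Hu. replace (l ^ 2) with (l * l) by ring.
  apply Un_cv_ext with (fun n => u n * u n); [intros; ring|]. apply CV_mult; assumption.
Qed.

Lemma Un_cv_sumR k (f : nat -> nat -> R) (l : nat -> R) :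
  (forall i, (i < k)%nat -> Un_cv (fun n => f n i) (l i)) ->
  Un_cv (fun n => sumR k (f n)) (sumR k l).
Proof.
  induction k as [|k IH]; intros Hf; simpl; [apply Un_cv_const|].
  apply CV_plus; [apply IH; intros|]; apply Hf; lia.
Qed.

Lemma Un_cv_subseq u (s : nat -> nat) l :
  (forall n, (n <= s n)%nat) -> Un_cv u l -> Un_cv (fun n => u (s n)) l.
Proof.
  intros Hs Hu e He. destruct (Hu e He) as [N HN]. exists N. intros n Hn.
  apply HN. specialize (Hs n). lia.
Qed.

Lemma Un_cv_squeeze0 u w : (forall n, 0 <= u n <= w n) -> Un_cv w 0 -> Un_cv u 0.
Proof.
  intros Huw Hw e He. destruct (Hw e He) as [N HN]. exists N. intros n Hn.
  specialize (HN n Hn). specialize (Huw n). unfold Rdist in *. rewrite Rminus_0_r in *.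
  rewrite Rabs_right by lra. pose proof (Rle_abs (w n)). lra.
Qed.

Lemma Un_cv_sqr_dominated u w c :
  0 < c -> (forall n, c * u n ^ 2 <= w n) -> Un_cv w 0 -> Un_cv u 0.
Proof.
  intros Hc Huw Hw e He.
  destruct (Hw (c * (e * e))) as [N HN]; [apply Rmult_lt_0_compat; nra|].
  exists N. intros n Hn. specialize (HN n Hn). specialize (Huw n). unfold Rdist in *.
  rewrite Rminus_0_r in *. apply Rnot_le_lt. intros Hge.
  assert (e * e <= u n ^ 2) by (rewrite <- (pow2_abs (u n)); nra).
  pose proof (Rle_abs (w n)). nra.
Qed.

Lemma Un_cv_limit1_in f u l :
  (forall n, 0 <= u n) -> limit1_in f (fun t => 0 <= t) (f l) l ->
  Un_cv u l -> Un_cv (fun n => f (u n)) (f l).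
Proof.
  intros Hu Hf Hul e He. destruct (Hf e He) as [a [Ha Hfa]].
  destruct (Hul a Ha) as [N HN]. exists N. intros n Hn. apply Hfa. split; auto.
Qed.

Lemma Un_cv_in_interval u l a b :
  (forall n, a <= u n <= b) -> Un_cv u l -> a <= l <= b.
Proof.
  intros Hu Hul. split.
  - apply (Rle_cv_lim (Un := fun _ => a) (Vn := u)); [apply Hu|apply Un_cv_const|assumption].
  - apply (Rle_cv_lim (Un := u) (Vn := fun _ => b)); [apply Hu|assumption|apply Un_cv_const].
Qed.

Definition mid (a b : nat -> R) (p : nat) : R := (a p + b p) / 2.

Section Majorizer.
Variable P : spultra_data.

(* [Fcurv G xb a b] is the Hessian form of the quadratic [Fmaj _ Z G xb] at [a - b]. *)
Definition Fcurv (G : nat -> nat) (xb a b : nat -> R) : R :=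
  sumR (Nd P) (fun i => curv P i (lin P xb i) * (lin P a i - lin P b i) ^ 2) +
  2 * beta P * sumR (Nt P) (fun j =>
    tau P j * sqnorm P (fun r => OmP P (G j) j a r - OmP P (G j) j b r)).

Lemma lin_mid a b i : lin P (mid a b) i = (lin P a i + lin P b i) / 2.
Proof.
  unfold lin, mid.
  rewrite (sumR_ext _ _ (fun p => /2 * (A P i p * a p) + /2 * (A P i p * b p)))
    by (intros; field).
  rewrite sumR_plus, !sumR_scal. field.
Qed.

Lemma OmP_mid k j a b r : OmP P k j (mid a b) r = (OmP P k j a r + OmP P k j b r) / 2.
Proof.
  unfold OmP, mid.
  rewrite (sumR_ext _ _ (fun c => /2 * (Om P k r c * a (patch P j c))
                                + /2 * (Om P k r c * b (patch P j c)))) by (intros; field).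
  rewrite sumR_plus, !sumR_scal. field.
Qed.

Lemma OmP_diff k j a b r : OmP P k j a r - OmP P k j b r =
  sumR (v P) (fun c => Om P k r c * (a (patch P j c) - b (patch P j c))).
Proof.
  unfold OmP. symmetry.
  rewrite (sumR_ext _ _ (fun c => Om P k r c * a (patch P j c)
                                + (-1) * (Om P k r c * b (patch P j c)))) by (intros; ring).
  rewrite sumR_plus, sumR_scal. ring.
Qed.

Lemma sqnorm_ext u w : (forall r, (r < v P)%nat -> u r = w r) -> sqnorm P u = sqnorm P w.
Proof. intros Huw. apply sumR_ext. intros r Hr. rewrite Huw; auto. Qed.

Lemma sqnorm_nonneg w : 0 <= sqnorm P w.
Proof. apply sumR_nonneg. intros. apply pow2_ge_0. Qed.

Lemma sqnorm_ge_term w r : (r < v P)%nat -> w r ^ 2 <= sqnorm P w.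
Proof. intros. apply (sumR_ge_term _ (fun r => w r ^ 2)); auto. intros; apply pow2_ge_0. Qed.

Lemma sqnorm_mid_sub u w z :
  sqnorm P (fun r => (u r + w r) / 2 - z r) =
  (sqnorm P (fun r => u r - z r) + sqnorm P (fun r => w r - z r)) / 2
  - sqnorm P (fun r => u r - w r) / 4.
Proof.
  unfold sqnorm.
  rewrite (sumR_ext _ _ (fun r => /2 * (u r - z r) ^ 2 + /2 * (w r - z r) ^ 2
                                + (-/4) * (u r - w r) ^ 2)) by (intros; field).
  rewrite !sumR_plus, !sumR_scal. field.
Qed.

Lemma Fmaj_mid a b Z G xb :
  Fmaj P (mid a b) Z G xb = (Fmaj P a Z G xb + Fmaj P b Z G xb) / 2 - Fcurv G xb a b / 8.
Proof.
  unfold Fmaj, Fcurv, Rreg.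
  rewrite (sumR_ext (Nd P) _
     (fun i => /2 * qsur P i (lin P a i) (lin P xb i) + /2 * qsur P i (lin P b i) (lin P xb i)
       + (-/8) * (curv P i (lin P xb i) * (lin P a i - lin P b i) ^ 2))).
  2:{ intros i _. rewrite lin_mid. unfold qsur. field. }
  rewrite (sumR_ext (Nt P) _
     (fun j => /2 * (tau P j * (sqnorm P (fun r => OmP P (G j) j a r - Z j r) + gc P ^ 2 * l0 P (Z j)))
       + /2 * (tau P j * (sqnorm P (fun r => OmP P (G j) j b r - Z j r) + gc P ^ 2 * l0 P (Z j)))
       + (-/4) * (tau P j * sqnorm P (fun r => OmP P (G j) j a r - OmP P (G j) j b r)))).
  2:{ intros j _.
      rewrite (sqnorm_ext _ (fun r => (OmP P (G j) j a r + OmP P (G j) j b r) / 2 - Z j r))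
        by (intros; rewrite OmP_mid; reflexivity).
      rewrite sqnorm_mid_sub. field. }
  rewrite !sumR_plus, !sumR_scal. field.
Qed.

Hypothesis HA : forall i p, (i < Nd P)%nat -> (p < Np P)%nat -> 0 <= A P i p.
Hypothesis Hc_pos : forall i, (i < Nd P)%nat -> forall l, 0 <= l -> 0 < curv P i l.
Hypothesis Htau : forall j, (j < Nt P)%nat -> 0 < tau P j.
Hypothesis Hbeta : 0 < beta P.

Lemma mid_inX a b : inX P a -> inX P b -> inX P (mid a b).
Proof. intros Ha Hb p Hp. specialize (Ha p Hp). specialize (Hb p Hp). unfold mid. lra. Qed.

Lemma lin_nonneg x i : inX P x -> (i < Nd P)%nat -> 0 <= lin P x i.
Proof.
  intros Hx Hi. apply sumR_nonneg. intros p Hp.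
  specialize (HA i p Hi Hp). specialize (Hx p Hp). nra.
Qed.

Lemma lin_le_max x i :
  inX P x -> (i < Nd P)%nat -> lin P x i <= sumR (Np P) (fun p => A P i p * xmax P).
Proof.
  intros Hx Hi. apply sumR_le. intros p Hp.
  specialize (HA i p Hi Hp). specialize (Hx p Hp). nra.
Qed.

Lemma Fcurv_ge_patch G xb a b j r : inX P xb -> (j < Nt P)%nat -> (r < v P)%nat ->
  2 * beta P * tau P j * (OmP P (G j) j a r - OmP P (G j) j b r) ^ 2 <= Fcurv G xb a b.
Proof.
  intros Hxb Hj Hr. unfold Fcurv.
  set (t := fun j => tau P j * sqnorm P (fun r => OmP P (G j) j a r - OmP P (G j) j b r)).
  assert (0 <= sumR (Nd P) (fun i => curv P i (lin P xb i) * (lin P a i - lin P b i) ^ 2)).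
  { apply sumR_nonneg. intros i Hi. apply Rmult_le_pos; [|apply pow2_ge_0].
    left. apply Hc_pos, lin_nonneg; auto. }
  assert (Ht : forall j, (j < Nt P)%nat -> 0 <= t j).
  { intros j' Hj'. apply Rmult_le_pos; [left; auto|apply sqnorm_nonneg]. }
  pose proof (sumR_ge_term _ t j Ht Hj).
  pose proof (sqnorm_ge_term (fun r => OmP P (G j) j a r - OmP P (G j) j b r) r Hr).
  assert (tau P j * (OmP P (G j) j a r - OmP P (G j) j b r) ^ 2 <= t j)
    by (apply Rmult_le_compat_l; [left; auto|assumption]).
  assert (2 * beta P * (tau P j * (OmP P (G j) j a r - OmP P (G j) j b r) ^ 2)
          <= 2 * beta P * sumR (Nt P) t) by (apply Rmult_le_compat_l; lra).
  lra.
Qed.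

Lemma Fcurv_nonneg G xb a b : inX P xb -> 0 <= Fcurv G xb a b.
Proof.
  intros Hxb. apply Rplus_le_le_0_compat.
  - apply sumR_nonneg. intros i Hi. apply Rmult_le_pos; [|apply pow2_ge_0].
    left. apply Hc_pos, lin_nonneg; auto.
  - apply Rmult_le_pos; [lra|]. apply sumR_nonneg. intros j Hj.
    apply Rmult_le_pos; [left; auto|apply sqnorm_nonneg].
Qed.

Lemma Fmaj_argmin_gap a b Z G xb : inX P a -> inX P b ->
  (forall y, inX P y -> Fmaj P a Z G xb <= Fmaj P y Z G xb) ->
  Fcurv G xb a b <= 4 * (Fmaj P b Z G xb - Fmaj P a Z G xb).
Proof.
  intros Ha Hb Hmin. pose proof (Hmin (mid a b) (mid_inX a b Ha Hb)).
  rewrite Fmaj_mid in H. lra.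
Qed.
End Majorizer.

Section Objective.
Variable P : spultra_data.
Hypothesis HA : forall i p, (i < Nd P)%nat -> (p < Np P)%nat -> 0 <= A P i p.
Hypothesis HI0 : 0 < I0 P.
Hypothesis Hsig : 0 <= sig2 P.
Hypothesis Hxmax : 0 < xmax P.
Hypothesis Htau : forall j, (j < Nt P)%nat -> 0 < tau P j.
Hypothesis Hbeta : 0 < beta P.
Hypothesis Hmaj : forall i, (i < Nd P)%nat -> forall l lb, 0 <= l -> 0 <= lb ->
  h P i l <= qsur P i l lb.

Lemma Fmaj_diag x Z G : Fmaj P x Z G x = Lfun P x + Rreg P x Z G.
Proof. unfold Fmaj, Lfun. f_equal. apply sumR_ext. intros. unfold qsur. ring. Qed.

Lemma Fmaj_majorizes y Z G xb : inX P y -> inX P xb ->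
  Lfun P y + Rreg P y Z G <= Fmaj P y Z G xb.
Proof.
  intros Hy Hxb. unfold Fmaj, Lfun. apply Rplus_le_compat_r, sumR_le.
  intros i Hi. apply Hmaj; auto; apply lin_nonneg; auto.
Qed.

Lemma Rreg_nonneg x Z G : 0 <= Rreg P x Z G.
Proof.
  apply Rmult_le_pos; [lra|]. apply sumR_nonneg. intros j Hj.
  apply Rmult_le_pos; [left; auto|]. apply Rplus_le_le_0_compat; [apply sqnorm_nonneg|].
  apply Rmult_le_pos; [apply pow2_ge_0|]. apply sumR_nonneg. intros r _.
  destruct (Req_dec_T (Z j r) 0); lra.
Qed.

Lemma gsc_pos i t : 0 < gsc P i t.
Proof. unfold gsc. pose proof (exp_pos (- fsc P i t)). nra. Qed.

Lemma h_continuous i l : continuity_pt (h P i) l.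
Proof. apply derivable_continuous_pt. exists (hdot P i l). apply hdot_correct; assumption. Qed.

Lemma hdot_continuous i l : continuity_pt (hdot P i) l.
Proof. pose proof (gsc_pos i l). unfold hdot, gsc, fsc in *. reg. lra. Qed.

Lemma Lfun_bounded_below : exists m, forall y, inX P y -> m <= Lfun P y.
Proof.
  assert (Hpartial : forall k, (k <= Nd P)%nat -> exists m, forall y, inX P y ->
            m <= sumR k (fun i => h P i (lin P y i))).
  { induction k as [|k IH]; intros Hk.
    - exists 0. intros; simpl; lra.
    - destruct IH as [m Hm]; [lia|].
      set (L := sumR (Np P) (fun p => A P k p * xmax P)).
      assert (HL : 0 <= L).
      { apply sumR_nonneg. intros p Hp. specialize (HA k p ltac:(lia) Hp). nra. }
      destruct (continuity_ab_min (h P k) 0 L HL) as [l [Hl _]].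
      { intros; apply h_continuous. }
      exists (m + h P k l). intros y Hy. simpl. specialize (Hm y Hy).
      assert (h P k l <= h P k (lin P y k))
        by (apply Hl; split; [apply lin_nonneg|apply lin_le_max]; auto; lia).
      lra. }
  apply Hpartial. lia.
Qed.
End Objective.

(* The [l0] term of [Fmaj] is discontinuous in the codes, but does not involve the image. *)
Definition Fsmooth (P : spultra_data) (y : nat -> R) (Z : nat -> nat -> R) (G : nat -> nat)
    (xb : nat -> R) : R :=
  sumR (Nd P) (fun i => qsur P i (lin P y i) (lin P xb i)) +
  beta P * sumR (Nt P) (fun j => tau P j * sqnorm P (fun r => OmP P (G j) j y r - Z j r)).

Definition l0_penalty (P : spultra_data) (Z : nat -> nat -> R) : R :=
  beta P * sumR (Nt P) (fun j => tau P j * (gc P ^ 2 * l0 P (Z j))).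

Lemma Fmaj_split P y Z G xb : Fmaj P y Z G xb = Fsmooth P y Z G xb + l0_penalty P Z.
Proof.
  unfold Fmaj, Fsmooth, l0_penalty, Rreg.
  rewrite (sumR_ext (Nt P) _ (fun j => tau P j * sqnorm P (fun r => OmP P (G j) j y r - Z j r)
                                    + tau P j * (gc P ^ 2 * l0 P (Z j)))) by (intros; ring).
  rewrite sumR_plus. ring.
Qed.

Section Continuity.
Variable P : spultra_data.
Hypothesis HA : forall i p, (i < Nd P)%nat -> (p < Np P)%nat -> 0 <= A P i p.
Hypothesis HI0 : 0 < I0 P.
Hypothesis Hsig : 0 <= sig2 P.
Hypothesis Hpatch_rng :
  forall j r, (j < Nt P)%nat -> (r < v P)%nat -> (patch P j r < Np P)%nat.
Hypothesis Hc_cont : forall i, (i < Nd P)%nat -> forall l, 0 <= l ->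
  limit1_in (curv P i) (fun t => 0 <= t) (curv P i l) l.

Lemma lin_cv (a : nat -> nat -> R) al i :
  (forall p, (p < Np P)%nat -> Un_cv (fun n => a n p) (al p)) ->
  Un_cv (fun n => lin P (a n) i) (lin P al i).
Proof.
  intros Ha. apply (Un_cv_sumR _ (fun n p => A P i p * a n p)).
  intros p Hp. apply Un_cv_scal; auto.
Qed.

Lemma OmP_cv k j (a : nat -> nat -> R) al r : (j < Nt P)%nat ->
  (forall p, (p < Np P)%nat -> Un_cv (fun n => a n p) (al p)) ->
  Un_cv (fun n => OmP P k j (a n) r) (OmP P k j al r).
Proof.
  intros Hj Ha. apply (Un_cv_sumR _ (fun n c => Om P k r c * a n (patch P j c))).
  intros c Hc. apply Un_cv_scal; auto.
Qed.

Lemma qsur_cv i u l ub lb : (i < Nd P)%nat -> (forall n, 0 <= ub n) -> 0 <= lb ->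
  Un_cv u l -> Un_cv ub lb -> Un_cv (fun n => qsur P i (u n) (ub n)) (qsur P i l lb).
Proof.
  intros Hi Hub Hlb Hu Hb. unfold qsur.
  apply CV_plus; [apply CV_plus|].
  - apply continuity_seq; [apply h_continuous|]; assumption.
  - apply CV_mult; [apply continuity_seq; [apply hdot_continuous|]|apply CV_minus]; assumption.
  - apply CV_mult.
    + apply Un_cv_scal, Un_cv_limit1_in; auto.
    + apply Un_cv_sqr, CV_minus; assumption.
Qed.

Lemma Fsmooth_cv (a b : nat -> nat -> R) (Zn : nat -> nat -> nat -> R) (Gn : nat -> nat -> nat)
    al bl Zl Gl :
  (forall p, (p < Np P)%nat -> Un_cv (fun n => a n p) (al p)) ->
  (forall p, (p < Np P)%nat -> Un_cv (fun n => b n p) (bl p)) ->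
  (forall j r, (j < Nt P)%nat -> (r < v P)%nat -> Un_cv (fun n => Zn n j r) (Zl j r)) ->
  (forall j, (j < Nt P)%nat -> exists M, forall n, (M <= n)%nat -> Gn n j = Gl j) ->
  (forall n, inX P (b n)) -> inX P bl ->
  Un_cv (fun n => Fsmooth P (a n) (Zn n) (Gn n) (b n)) (Fsmooth P al Zl Gl bl).
Proof.
  intros Ha Hb HZ HG Hbn Hbl. apply CV_plus.
  - apply (Un_cv_sumR _ (fun n i => qsur P i (lin P (a n) i) (lin P (b n) i))).
    intros i Hi. apply qsur_cv; auto using lin_cv.
    + intros; apply lin_nonneg; auto.
    + apply lin_nonneg; auto.
  - apply Un_cv_scal.
    apply (Un_cv_sumR _ (fun n j => tau P j * sqnorm P (fun r => OmP P (Gn n j) j (a n) r - Zn n j r))).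
    intros j Hj.
    apply Un_cv_eventually_eq
      with (fun n => tau P j * sqnorm P (fun r => OmP P (Gl j) j (a n) r - Zn n j r)).
    { destruct (HG j Hj) as [M HM]. exists M. intros n Hn. rewrite HM; auto. }
    apply Un_cv_scal, (Un_cv_sumR _ (fun n r => (OmP P (Gl j) j (a n) r - Zn n j r) ^ 2)).
    intros r Hr. apply Un_cv_sqr, CV_minus; [apply OmP_cv|apply HZ]; auto.
Qed.
End Continuity.

Section Injectivity.
Variable P : spultra_data.
Hypothesis HA : forall i p, (i < Nd P)%nat -> (p < Np P)%nat -> 0 <= A P i p.
Hypothesis Hcover : forall p, (p < Np P)%nat ->
  exists j r, (j < Nt P)%nat /\ (r < v P)%nat /\ patch P j r = p.
Hypothesis HOm : forall k, (k < K P)%nat -> forall z : nat -> R,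
  (forall r, (r < v P)%nat -> sumR (v P) (fun c => Om P k r c * z c) = 0) ->
  forall c, (c < v P)%nat -> z c = 0.
Hypothesis Htau : forall j, (j < Nt P)%nat -> 0 < tau P j.
Hypothesis Hbeta : 0 < beta P.
Hypothesis Hc_pos : forall i, (i < Nd P)%nat -> forall l, 0 <= l -> 0 < curv P i l.

Lemma OmP_diff_cv0 (Gn : nat -> nat -> nat) (xb a b : nat -> nat -> R) j r :
  (forall n, inX P (xb n)) -> (j < Nt P)%nat -> (r < v P)%nat ->
  Un_cv (fun n => Fcurv P (Gn n) (xb n) (a n) (b n)) 0 ->
  Un_cv (fun n => OmP P (Gn n j) j (a n) r - OmP P (Gn n j) j (b n) r) 0.
Proof.
  intros Hxb Hj Hr Hcv.
  apply (Un_cv_sqr_dominated _ (fun n => Fcurv P (Gn n) (xb n) (a n) (b n))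
           (2 * beta P * tau P j)); [| |exact Hcv].
  - pose proof (Htau j Hj). nra.
  - intros n. apply Fcurv_ge_patch; auto.
Qed.

(* On each patch the class is eventually fixed, and its transform has a left inverse. *)
Lemma Fcurv_cv0_diff_cv0 (Gn : nat -> nat -> nat) (Gl : nat -> nat) (xb a b : nat -> nat -> R) p :
  (forall n, inX P (xb n)) -> valid_class P Gl ->
  (forall j, (j < Nt P)%nat -> exists M, forall n, (M <= n)%nat -> Gn n j = Gl j) ->
  Un_cv (fun n => Fcurv P (Gn n) (xb n) (a n) (b n)) 0 -> (p < Np P)%nat ->
  Un_cv (fun n => a n p - b n p) 0.
Proof.
  intros Hxb HGl HGn Hcv Hp.
  destruct (Hcover p Hp) as [j [c [Hj [Hc <-]]]].
  destruct (HGn j Hj) as [M HM].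
  destruct (SquareSystem.injective_left_inverse (v P) (Om P (Gl j)) (HOm (Gl j) (HGl j Hj)))
    as [B HB].
  set (w := fun n c => a n (patch P j c) - b n (patch P j c)).
  apply Un_cv_ext with (fun n => sumR (v P) (fun r => B c r *
                                 sumR (v P) (fun c' => Om P (Gl j) r c' * w n c'))).
  { intros n. apply HB. lia. }
  replace 0 with (sumR (v P) (fun r => B c r * 0)).
  2:{ rewrite (sumR_ext _ _ (fun r => 0 * B c r)), sumR_scal by (intros; ring). ring. }
  apply (Un_cv_sumR _ (fun n r => B c r * sumR (v P) (fun c' => Om P (Gl j) r c' * w n c'))).
  intros r Hr. apply Un_cv_scal.
  apply Un_cv_eventually_eq
    with (fun n => OmP P (Gn n j) j (a n) r - OmP P (Gn n j) j (b n) r).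
  - exists M. intros n Hn. rewrite HM, OmP_diff by assumption. reflexivity.
  - apply OmP_diff_cv0 with (xb := xb); auto.
Qed.

Lemma Fmaj_argmin_unique a b Z G xb : inX P xb -> valid_class P G ->
  inX P a -> (forall y, inX P y -> Fmaj P a Z G xb <= Fmaj P y Z G xb) ->
  inX P b -> (forall y, inX P y -> Fmaj P b Z G xb <= Fmaj P y Z G xb) ->
  forall p, (p < Np P)%nat -> a p = b p.
Proof.
  intros Hxb HG Ha Hamin Hb Hbmin p Hp.
  pose proof (Fmaj_argmin_gap P a b Z G xb Ha Hb Hamin).
  pose proof (Hbmin a Ha). pose proof (Fcurv_nonneg P HA Hc_pos Htau Hbeta G xb a b Hxb).
  assert (Hcv : Un_cv (fun _ => a p - b p) 0).
  { apply (Fcurv_cv0_diff_cv0 (fun _ => G) G (fun _ => xb) (fun _ => a) (fun _ => b));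
      auto.
    - intros j _. exists O. reflexivity.
    - replace (Fcurv P G xb a b) with 0 by lra. apply Un_cv_const. }
  pose proof (UL_sequence _ _ _ Hcv (Un_cv_const (a p - b p))). lra.
Qed.
End Injectivity.

Section Iterates.
Variable P : spultra_data.
Hypothesis HA : forall i p, (i < Nd P)%nat -> (p < Np P)%nat -> 0 <= A P i p.
Hypothesis HI0 : 0 < I0 P.
Hypothesis Hsig : 0 <= sig2 P.
Hypothesis Hxmax : 0 < xmax P.
Hypothesis Hpatch_rng :
  forall j r, (j < Nt P)%nat -> (r < v P)%nat -> (patch P j r < Np P)%nat.
Hypothesis Hcover : forall p, (p < Np P)%nat ->
  exists j r, (j < Nt P)%nat /\ (r < v P)%nat /\ patch P j r = p.
Hypothesis HOm : forall k, (k < K P)%nat -> forall z : nat -> R,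
  (forall r, (r < v P)%nat -> sumR (v P) (fun c => Om P k r c * z c) = 0) ->
  forall c, (c < v P)%nat -> z c = 0.
Hypothesis Htau : forall j, (j < Nt P)%nat -> 0 < tau P j.
Hypothesis Hbeta : 0 < beta P.
Hypothesis Hc_cont : forall i, (i < Nd P)%nat -> forall l, 0 <= l ->
  limit1_in (curv P i) (fun t => 0 <= t) (curv P i l) l.
Hypothesis Hc_pos : forall i, (i < Nd P)%nat -> forall l, 0 <= l -> 0 < curv P i l.
Hypothesis Hmaj : forall i, (i < Nd P)%nat -> forall l lb, 0 <= l -> 0 <= lb ->
  h P i l <= qsur P i l lb.

Variables (x : nat -> nat -> R) (Z : nat -> nat -> nat -> R) (G : nat -> nat -> nat).
Hypothesis Hseq : spultra_seq P x Z G.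

Lemma spultra_inX n : inX P (x n).
Proof. destruct Hseq as [Hx0 [_ Hstep]]. destruct n; [assumption|apply Hstep]. Qed.

Lemma spultra_valid_class n : valid_class P (G n).
Proof. destruct Hseq as [_ [HG0 Hstep]]. destruct n; [assumption|apply Hstep]. Qed.

Definition spultra_cost n := Lfun P (x n) + Rreg P (x n) (Z n) (G n).

Lemma spultra_descent n :
  spultra_cost (S n) + Fcurv P (G n) (x n) (x (S n)) (x n) / 4 <= spultra_cost n.
Proof.
  destruct Hseq as [_ [_ Hstep]]. destruct (Hstep n) as [[HxS Hxmin] [_ HZmin]].
  pose proof (HZmin (Z n) (G n) (spultra_valid_class n)) as Hsparse.
  pose proof (Fmaj_majorizes P HA Hmaj (x (S n)) (Z n) (G n) (x n) HxS (spultra_inX n)).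
  pose proof (Fmaj_argmin_gap P _ _ (Z n) (G n) (x n) HxS (spultra_inX n) Hxmin) as Hgap.
  rewrite Fmaj_diag in Hgap. unfold spultra_cost. lra.
Qed.

(* The decreasing cost is bounded below, so the gaps in [spultra_descent] are summable. *)
Lemma spultra_step_cv0 : Un_cv (fun n => Fcurv P (G n) (x n) (x (S n)) (x n)) 0.
Proof.
  assert (Hgap : forall n, 0 <= Fcurv P (G n) (x n) (x (S n)) (x n))
    by (intros; apply Fcurv_nonneg; auto using spultra_inX).
  assert (Hdec : Un_decreasing spultra_cost).
  { intros n. pose proof (spultra_descent n). pose proof (Hgap n). lra. }
  assert (Hlb : has_lb spultra_cost).
  { destruct (Lfun_bounded_below P HA HI0 Hsig Hxmax) as [m Hm].
    exists (- m). intros c [n ->]. unfold opp_seq, spultra_cost.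
    pose proof (Hm (x n) (spultra_inX n)). pose proof (Rreg_nonneg P Htau Hbeta (x n) (Z n) (G n)).
    lra. }
  destruct (decreasing_cv spultra_cost Hdec Hlb) as [l Hl].
  apply Un_cv_squeeze0 with (fun n => 4 * (spultra_cost n - spultra_cost (S n))).
  - intros n. pose proof (spultra_descent n). pose proof (Hgap n). lra.
  - replace 0 with (4 * (l - l)) by ring.
    apply Un_cv_scal, CV_minus; [|apply (Un_cv_subseq _ S)]; auto.
Qed.

Variables (q : nat -> nat) (xs : nat -> R) (Zs : nat -> nat -> R) (Gs : nat -> nat).
Hypothesis Hq_incr : forall m, (q m < q (S m))%nat.
Hypothesis Hq_pos : forall m, (1 <= q m)%nat.
Hypothesis Hx_cv : forall p, (p < Np P)%nat -> Un_cv (fun m => x (q m) p) (xs p).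
Hypothesis HZ_cv : forall j r, (j < Nt P)%nat -> (r < v P)%nat ->
  Un_cv (fun m => Z (q m - 1)%nat j r) (Zs j r).
Hypothesis HG_cv : forall j, (j < Nt P)%nat ->
  exists M, forall m, (M <= m)%nat -> G (q m - 1)%nat j = Gs j.

Lemma subseq_pred_ge m : (m <= q m - 1)%nat.
Proof.
  assert (Hq_ge : forall n, (n + 1 <= q n)%nat).
  { induction n; [apply Hq_pos|]. specialize (Hq_incr n). lia. }
  specialize (Hq_ge m). lia.
Qed.

Lemma limit_valid_class : valid_class P Gs.
Proof.
  intros j Hj. destruct (HG_cv j Hj) as [M HM].
  rewrite <- (HM M) by lia. apply spultra_valid_class, Hj.
Qed.

Lemma spultra_prev_cv p : (p < Np P)%nat -> Un_cv (fun m => x (q m - 1)%nat p) (xs p).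
Proof.
  intros Hp. replace (xs p) with (xs p - 0) by ring.
  apply Un_cv_ext with (fun m => x (q m) p - (x (q m) p - x (q m - 1)%nat p)); [intros; ring|].
  apply CV_minus; auto.
  apply (Fcurv_cv0_diff_cv0 P HA Hcover HOm Htau Hbeta Hc_pos
           (fun m => G (q m - 1)%nat) Gs (fun m => x (q m - 1)%nat)
           (fun m => x (q m)) (fun m => x (q m - 1)%nat)); auto.
  - intros; apply spultra_inX.
  - apply limit_valid_class.
  - apply Un_cv_ext with (fun m => Fcurv P (G (q m - 1)%nat) (x (q m - 1)%nat)
                                        (x (S (q m - 1))) (x (q m - 1)%nat)).
    + intros m. replace (S (q m - 1)) with (q m) by (specialize (Hq_pos m); lia). reflexivity.
    + apply (Un_cv_subseq (fun n => Fcurv P (G n) (x n) (x (S n)) (x n))).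
      * apply subseq_pred_ge.
      * apply spultra_step_cv0.
Qed.

Lemma limit_inX : inX P xs.
Proof.
  intros p Hp. apply (Un_cv_in_interval (fun m => x (q m) p)); auto.
  intros m. apply (spultra_inX (q m) p Hp).
Qed.

Lemma spultra_limit_argmin y : inX P y -> Fmaj P xs Zs Gs xs <= Fmaj P y Zs Gs xs.
Proof.
  intros Hy. rewrite !Fmaj_split. apply Rplus_le_compat_r.
  assert (Hprev : forall m, inX P (x (q m - 1)%nat)) by (intros; apply spultra_inX).
  apply (Rle_cv_lim
    (Un := fun m => Fsmooth P (x (q m)) (Z (q m - 1)%nat) (G (q m - 1)%nat) (x (q m - 1)%nat))
    (Vn := fun m => Fsmooth P y (Z (q m - 1)%nat) (G (q m - 1)%nat) (x (q m - 1)%nat))).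
  - intros m. destruct Hseq as [_ [_ Hstep]]. destruct (Hstep (q m - 1)%nat) as [[_ Hmin] _].
    replace (S (q m - 1)) with (q m) in Hmin by (specialize (Hq_pos m); lia).
    specialize (Hmin y Hy). rewrite !Fmaj_split in Hmin. lra.
  - apply Fsmooth_cv; auto using spultra_prev_cv, limit_inX.
  - apply Fsmooth_cv; auto using spultra_prev_cv, limit_inX, Un_cv_const.
Qed.
End Iterates.

Theorem lemma1 (P : spultra_data)
  (HA : forall i p, (i < Nd P)%nat -> (p < Np P)%nat -> 0 <= A P i p)
  (HI0 : 0 < I0 P) (Hsig : 0 <= sig2 P) (Hxmax : 0 < xmax P)
  (Hpatch_rng : forall j r, (j < Nt P)%nat -> (r < v P)%nat -> (patch P j r < Np P)%nat)
  (Hpatch_inj : forall j r1 r2, (j < Nt P)%nat -> (r1 < v P)%nat -> (r2 < v P)%nat ->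
      patch P j r1 = patch P j r2 -> r1 = r2)
  (Hcover : forall p, (p < Np P)%nat ->
      exists j r, (j < Nt P)%nat /\ (r < v P)%nat /\ patch P j r = p)
  (HOm : forall k, (k < K P)%nat -> forall z : nat -> R,
      (forall r, (r < v P)%nat -> sumR (v P) (fun c => Om P k r c * z c) = 0) ->
      forall c, (c < v P)%nat -> z c = 0)
  (Htau : forall j, (j < Nt P)%nat -> 0 < tau P j)
  (Hbeta : 0 < beta P) (Hgc : 0 < gc P)
  (Hc_cont : forall i, (i < Nd P)%nat -> forall l, 0 <= l ->
      limit1_in (curv P i) (fun t => 0 <= t) (curv P i l) l)
  (Hc_pos : forall i, (i < Nd P)%nat -> forall l, 0 <= l -> 0 < curv P i l)
  (Hmaj : forall i, (i < Nd P)%nat -> forall l lb, 0 <= l -> 0 <= lb ->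
      h P i l <= qsur P i l lb)
  (x : nat -> nat -> R) (Z : nat -> nat -> nat -> R) (G : nat -> nat -> nat)
  (Hseq : spultra_seq P x Z G)
  (q : nat -> nat) (Hq_incr : forall m, (q m < q (S m))%nat) (Hq_pos : forall m, (1 <= q m)%nat)
  (xs : nat -> R) (Zs : nat -> nat -> R) (Gs : nat -> nat)
  (Hx_cv : forall p, (p < Np P)%nat -> Un_cv (fun m => x (q m) p) (xs p))
  (HZ_cv : forall j r, (j < Nt P)%nat -> (r < v P)%nat ->
      Un_cv (fun m => Z (q m - 1)%nat j r) (Zs j r))
  (HG_cv : forall j, (j < Nt P)%nat ->
      exists M, forall m, (M <= m)%nat -> G (q m - 1)%nat j = Gs j) :
  (forall p, (p < Np P)%nat -> Un_cv (fun m => x (q m - 1)%nat p) (xs p)) /\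
  (inX P xs /\ forall y, inX P y -> Fmaj P xs Zs Gs xs <= Fmaj P y Zs Gs xs) /\
  (forall y, inX P y -> (forall y', inX P y' -> Fmaj P y Zs Gs xs <= Fmaj P y' Zs Gs xs) ->
      forall p, (p < Np P)%nat -> y p = xs p).
Proof.
  assert (Hxs : inX P xs) by (eapply limit_inX; eassumption).
  assert (Hmin : forall y, inX P y -> Fmaj P xs Zs Gs xs <= Fmaj P y Zs Gs xs)
    by (intros; eapply spultra_limit_argmin; eassumption).
  split; [|split; [split; assumption|]].
  - intros p Hp. eapply spultra_prev_cv; eassumption.
  - intros y Hy Hymin.
    apply (Fmaj_argmin_unique P HA Hcover HOm Htau Hbeta Hc_pos y xs Zs Gs xs); auto.
    eapply limit_valid_class; eassumption.
Qed.
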